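(* With $G$, $d$, $G_0$, $X$ and the topology $\tau$ as in the context, the space $(X,\tau)$ is regular.
   Context: Let $G$ be a Polish group, $d$ a compatible right-invariant metric on $G$ (i.e. $d(g_0h,g_1h)=d(g_0,g_1)$) bounded by $1$, and $G_0$ a countable dense subgroup of $G$. Let $\mathcal L(G,d)$ be the set of functions $f:G\to[0,1]$ with $|f(g_1)-f(g_2)|\le d(g_1,g_2)$ for all $g_1,g_2$. Let $\mathbb Q^{<\mathbb N}$ be the set of finite sequences of rationals; for $s\in\mathbb Q^{<\mathbb N}$ and rationals $a_1,\dots,a_k$, $sa_1\dots a_k$ denotes the sequence $s$ followed by $a_1,\dots,a_k$ (natural numbers are regarded as rationals). Elements of $\mathcal L(G,d)^{\mathbb Q^{<\mathbb N}}$ are families $\vec f=(f_s)_{s\in\mathbb Q^{<\mathbb N}}$, and $G$ acts by $(g\cdot\vec f)_s(g_0)=f_s(g_0g)$. Let $X$ be the set of $\vec f\in\mathcal L(G,d)^{\mathbb Q^{<\mathbb N}}$ such that, writing $t=sq_0q_1q_2\,0\,m\,n$ and $u=sq_0q_1q_2\,1\,m\,n$: (1) for all $s\in\mathbb Q^{<\mathbb N}$, $g_0\in G_0$, $m,n\in\mathbb N$, $q_0,q_1,q_2,\epsilon\in\mathbb Q\cap(0,1)$ with $0<q_i\pm\epsilon<1$ ($i=0,1,2$): $f_t(g_0)<q_1-\epsilon$ or $f_s(g_0)\le q_0+\epsilon$; (2) for the same range of parameters: $f_u(g_0)\ge q_2+\epsilon$ or $f_t(g_0)\ge q_1-\epsilon$;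 (3) for all $s\in\mathbb Q^{<\mathbb N}$, $g_0\in G_0$, $q_0,\epsilon\in\mathbb Q\cap(0,1)$: if $f_s(g_0)<q_0$ then there are $q_1,q_2\in\mathbb Q$, $g_1\in G_0$, $m,n\in\mathbb N$ with $0<q_2<q_1<q_0<1$, $d(g_0,g_1)<\epsilon$, and $f_u(g_1)<q_2$ where $u=sq_0q_1q_2\,1\,m\,n$. The topology $\tau$ on $X$ is the one generated by the subbasis of all sets $\{\vec f\in X: f_s(g_0)<q_0\}$ for $s\in\mathbb Q^{<\mathbb N}$, $g_0\in G_0$, $q_0\in\mathbb Q$. *)

From Stdlib Require Import Reals List QArith Qcanon.
Open Scope R_scope.

Definition is_group {G : Type} (mul : G -> G -> G) (inv : G -> G) (e : G) : Prop :=
  (forall x y z, mul x (mul y z) = mul (mul x y) z) /\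
  (forall x, mul e x = x) /\ (forall x, mul x e = x) /\
  (forall x, mul (inv x) x = e) /\ (forall x, mul x (inv x) = e).

Definition is_metric {G : Type} (d : G -> G -> R) : Prop :=
  (forall x y, 0 <= d x y) /\
  (forall x y, d x y = 0 <-> x = y) /\
  (forall x y, d x y = d y x) /\
  (forall x y z, d x z <= d x y + d y z).

Definition equiv_metrics {G : Type} (d d' : G -> G -> R) : Prop :=
  (forall x eps, 0 < eps -> exists del, 0 < del /\ forall y, d x y < del -> d' x y < eps) /\
  (forall x eps, 0 < eps -> exists del, 0 < del /\ forall y, d' x y < del -> d x y < eps).

Definition complete_metric {G : Type} (d : G -> G -> R) : Prop :=
  forall u : nat -> G,
    (forall eps, 0 < eps -> exists N, forall n m, (N <= n)%nat -> (N <= m)%nat -> d (u n) (u m) < eps) ->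
    exists l, forall eps, 0 < eps -> exists N, forall n, (N <= n)%nat -> d (u n) l < eps.

Definition polish_group_with_metric {G : Type} (mul : G -> G -> G) (inv : G -> G) (e : G)
    (d : G -> G -> R) : Prop :=
  is_group mul inv e /\ is_metric d /\
  (forall x y eps, 0 < eps -> exists del, 0 < del /\
      forall x' y', d x x' < del -> d y y' < del -> d (mul x y) (mul x' y') < eps) /\
  (forall x eps, 0 < eps -> exists del, 0 < del /\
      forall x', d x x' < del -> d (inv x) (inv x') < eps) /\
  (exists D : nat -> G, forall x eps, 0 < eps -> exists n, d x (D n) < eps) /\
  (exists d', is_metric d' /\ equiv_metrics d d' /\ complete_metric d').

Definition right_invariant {G : Type} (mul : G -> G -> G) (d : G -> G -> R) : Prop :=
  forall g0 g1 h, d (mul g0 h) (mul g1 h) = d g0 g1.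

Definition bounded_by_one {G : Type} (d : G -> G -> R) : Prop :=
  forall x y, d x y <= 1.

Definition countable_dense_subgroup {G : Type} (mul : G -> G -> G) (inv : G -> G) (e : G)
    (d : G -> G -> R) (G0 : G -> Prop) : Prop :=
  G0 e /\ (forall x y, G0 x -> G0 y -> G0 (mul x y)) /\ (forall x, G0 x -> G0 (inv x)) /\
  (exists enum : nat -> G, forall g, G0 g <-> exists n, enum n = g) /\
  (forall g eps, 0 < eps -> exists g0, G0 g0 /\ d g g0 < eps).

Definition QR (q : Qc) : R := Q2R (this q).
Definition natQ (m : nat) : Qc := Q2Qc (inject_Z (Z.of_nat m)).
Definition in01 (q : Qc) : Prop := 0 < QR q < 1.

Definition lip1 {G : Type} (d : G -> G -> R) (f : G -> R) : Prop :=
  (forall g, 0 <= f g <= 1) /\ (forall g1 g2, Rabs (f g1 - f g2) <= d g1 g2).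

Definition family (G : Type) := list Qc -> G -> R.

Definition tseq (s : list Qc) (q0 q1 q2 : Qc) (m n : nat) : list Qc :=
  s ++ (q0 :: q1 :: q2 :: Q2Qc 0%Q :: natQ m :: natQ n :: nil).
Definition useq (s : list Qc) (q0 q1 q2 : Qc) (m n : nat) : list Qc :=
  s ++ (q0 :: q1 :: q2 :: Q2Qc 1%Q :: natQ m :: natQ n :: nil).

Definition inX {G : Type} (d : G -> G -> R) (G0 : G -> Prop) (f : family G) : Prop :=
  (forall s, lip1 d (f s)) /\
  (forall s g0 m n q0 q1 q2 eps, G0 g0 ->
     in01 q0 -> in01 q1 -> in01 q2 -> in01 eps ->
     0 < QR q0 - QR eps < 1 -> 0 < QR q0 + QR eps < 1 ->
     0 < QR q1 - QR eps < 1 -> 0 < QR q1 + QR eps < 1 ->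
     0 < QR q2 - QR eps < 1 -> 0 < QR q2 + QR eps < 1 ->
     f (tseq s q0 q1 q2 m n) g0 < QR q1 - QR eps \/ f s g0 <= QR q0 + QR eps) /\
  (forall s g0 m n q0 q1 q2 eps, G0 g0 ->
     in01 q0 -> in01 q1 -> in01 q2 -> in01 eps ->
     0 < QR q0 - QR eps < 1 -> 0 < QR q0 + QR eps < 1 ->
     0 < QR q1 - QR eps < 1 -> 0 < QR q1 + QR eps < 1 ->
     0 < QR q2 - QR eps < 1 -> 0 < QR q2 + QR eps < 1 ->
     f (useq s q0 q1 q2 m n) g0 >= QR q2 + QR eps \/ f (tseq s q0 q1 q2 m n) g0 >= QR q1 - QR eps) /\
  (forall s g0 q0 eps, G0 g0 -> in01 q0 -> in01 eps ->
     f s g0 < QR q0 ->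
     exists q1 q2 g1 m n, G0 g1 /\
       0 < QR q2 < QR q1 /\ QR q1 < QR q0 < 1 /\ d g0 g1 < QR eps /\
       f (useq s q0 q1 q2 m n) g1 < QR q2).

(* subbasic set {f in X : f_s(g0) < q0}; the X-part is handled in tau_open *)
Definition subbasic_holds {G : Type} (f : family G) (p : list Qc * G * Qc) : Prop :=
  match p with (s, g0, q0) => f s g0 < QR q0 end.

Definition tau_open {G : Type} (d : G -> G -> R) (G0 : G -> Prop) (U : family G -> Prop) : Prop :=
  (forall f, U f -> inX d G0 f) /\
  forall f, U f -> exists l : list (list Qc * G * Qc),
    Forall (fun p => G0 (snd (fst p))) l /\
    Forall (subbasic_holds f) l /\
    (forall f', inX d G0 f' -> Forall (subbasic_holds f') l -> U f').

Definition tau_closed {G : Type} (d : G -> G -> R) (G0 : G -> Prop) (C : family G -> Prop) : Prop :=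
  (forall f, C f -> inX d G0 f) /\
  tau_open d G0 (fun f => inX d G0 f /\ ~ C f).

Definition tau_regular {G : Type} (d : G -> G -> R) (G0 : G -> Prop) : Prop :=
  forall (x : family G) (C : family G -> Prop),
    inX d G0 x -> tau_closed d G0 C -> ~ C x ->
    exists U V : family G -> Prop,
      tau_open d G0 U /\ tau_open d G0 V /\ U x /\ (forall y, C y -> V y) /\
      (forall y, ~ (U y /\ V y)).

(* Regularity is checked on subbasic sets, one at a time.  If [x_s(g0) < q0],
   choose a rational [q0'] slightly above [x_s(g0)] and a small [eps], and apply
   condition (3) of [X] at [(s, g0, q0', eps)]: it yields [g1] close to [g0]
   with [x_u(g1) < q2].
   The open set [{f | f_u(g1) < q2}] contains [x], the open set
   [{f | f_t(g1) < q1 - e}] is disjoint from it by condition (2), and by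
   condition (1) together with the Lipschitz bound it contains every [f] with
   [f_s(g0) >= q0].  For a basic neighbourhood one intersects the sets
   containing [x] and takes the union of the others. *)

From Pilot Require Import Defs.
From Stdlib Require Import Reals List QArith Qcanon Qreals Lra Lia Classical.
Open Scope R_scope.

Lemma QR_Q2Qc (q : Q) : QR (Q2Qc q) = Q2R q.
Proof. unfold QR; simpl. apply Qeq_eqR, Qred_correct. Qed.

Lemma exists_QR_between (a b : R) : a < b -> exists q : Qc, a < QR q < b.
Proof.
  intros Hab.
  destruct (archimed (/ (b - a))) as [Hz _].
  set (z := up (/ (b - a))) in *.
  assert (Hpos : 0 < / (b - a)) by (apply Rinv_0_lt_compat; lra).
  assert (Hz_pos : (0 < z)%Z) by (apply lt_0_IZR; lra).
  assert (Hzr : 0 < IZR z) by lra.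
  assert (Hgap : 1 < (b - a) * IZR z).
  { apply (Rmult_lt_reg_l (/ (b - a))); auto.
    rewrite <- Rmult_assoc, Rinv_l by lra. lra. }
  destruct (archimed (a * IZR z)) as [Hk1 Hk2].
  set (k := up (a * IZR z)) in *.
  exists (Q2Qc (k # Z.to_pos z)).
  rewrite QR_Q2Qc. unfold Q2R; simpl. rewrite Z2Pos.id by lia.
  split; apply (Rmult_lt_reg_r (IZR z)); auto; field_simplify; lra.
Qed.

(* The constraints on [q0, q1, q2, eps] shared by conditions (1) and (2). *)
Definition admissible (q0 q1 q2 eps : Qc) : Prop :=
  in01 q0 /\ in01 q1 /\ in01 q2 /\ in01 eps /\
  0 < QR q0 - QR eps < 1 /\ 0 < QR q0 + QR eps < 1 /\
  0 < QR q1 - QR eps < 1 /\ 0 < QR q1 + QR eps < 1 /\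
  0 < QR q2 - QR eps < 1 /\ 0 < QR q2 + QR eps < 1.

Lemma admissible_small (q0 q1 q2 : Qc) :
  in01 q0 -> in01 q1 -> in01 q2 ->
  exists del, 0 < del /\ forall eps, 0 < QR eps < del -> admissible q0 q1 q2 eps.
Proof.
  unfold in01; intros H0 H1 H2.
  pose (r0 := Rmin (QR q0) (1 - QR q0)); pose (r1 := Rmin (QR q1) (1 - QR q1));
    pose (r2 := Rmin (QR q2) (1 - QR q2)).
  assert (r0 <= QR q0 /\ r0 <= 1 - QR q0) by (split; [apply Rmin_l | apply Rmin_r]).
  assert (r1 <= QR q1 /\ r1 <= 1 - QR q1) by (split; [apply Rmin_l | apply Rmin_r]).
  assert (r2 <= QR q2 /\ r2 <= 1 - QR q2) by (split; [apply Rmin_l | apply Rmin_r]).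
  assert (0 < r0 /\ 0 < r1 /\ 0 < r2) by (repeat split; apply Rmin_glb_lt; lra).
  clearbody r0 r1 r2.
  exists (Rmin (Rmin r0 r1) r2).
  pose proof (Rmin_l (Rmin r0 r1) r2); pose proof (Rmin_r (Rmin r0 r1) r2).
  pose proof (Rmin_l r0 r1); pose proof (Rmin_r r0 r1).
  split; [repeat apply Rmin_glb_lt; lra|].
  intros eps Heps.
  unfold admissible, in01; lra.
Qed.

Definition trip (G : Type) := (list Qc * G * Qc)%type.

Section SeparationInX.

Variables (G : Type) (d : G -> G -> R) (G0 : G -> Prop).

Definition on_G0 (p : trip G) : Prop := G0 (snd (fst p)).

Lemma inX_bounds (f : Defs.family G) (s : list Qc) (g : G) :
  inX d G0 f -> 0 <= f s g <= 1.
Proof. intros [HL _]. apply (HL s). Qed.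

Lemma inX_lip (f : Defs.family G) (s : list Qc) (g g' : G) :
  inX d G0 f -> f s g - f s g' <= d g g'.
Proof.
  intros [HL _]. destruct (HL s) as [_ Hlip].
  eapply Rle_trans; [apply Rle_abs | apply Hlip].
Qed.

Lemma inX_cond1 (f : Defs.family G) s g m n q0 q1 q2 eps :
  inX d G0 f -> G0 g -> admissible q0 q1 q2 eps ->
  f (tseq s q0 q1 q2 m n) g < QR q1 - QR eps \/ f s g <= QR q0 + QR eps.
Proof.
  intros [_ [H1 _]] Hg Hadm. unfold admissible in Hadm. apply H1; tauto.
Qed.

Lemma inX_cond2 (f : Defs.family G) s g m n q0 q1 q2 eps :
  inX d G0 f -> G0 g -> admissible q0 q1 q2 eps ->
  ~ (f (useq s q0 q1 q2 m n) g < QR q2 /\ f (tseq s q0 q1 q2 m n) g < QR q1 - QR eps).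
Proof.
  intros [_ [_ [H2 _]]] Hg Hadm [Hu Ht]. unfold admissible, in01 in Hadm.
  destruct (H2 s g m n q0 q1 q2 eps); unfold in01; try tauto; lra.
Qed.

Lemma inX_cond3 (f : Defs.family G) s g q0 eps :
  inX d G0 f -> G0 g -> in01 q0 -> in01 eps -> f s g < QR q0 ->
  exists q1 q2 g1 m n, G0 g1 /\
    0 < QR q2 < QR q1 /\ QR q1 < QR q0 < 1 /\ d g g1 < QR eps /\
    f (useq s q0 q1 q2 m n) g1 < QR q2.
Proof. intros [_ [_ [_ H3]]]. apply H3. Qed.

Lemma subbasic_separation (x : Defs.family G) (p : trip G) :
  inX d G0 x -> on_G0 p -> subbasic_holds x p ->
  exists pu pv : trip G,
    on_G0 pu /\ on_G0 pv /\ subbasic_holds x pu /\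
    (forall f, inX d G0 f -> subbasic_holds f pu -> subbasic_holds f pv -> False) /\
    (forall f, inX d G0 f -> ~ subbasic_holds f p -> subbasic_holds f pv).
Proof.
  destruct p as [[s g0] q0]; unfold on_G0, subbasic_holds; simpl.
  intros Hx Hg0 Hlt.
  destruct (Rle_or_lt (QR q0) 1) as [Hq0 | Hq0].
  2:{ (* [q0 > 1 >= f_s(g0)] for every [f] in [X] *)
    exists (s, g0, q0), (s, g0, Q2Qc 0%Q); simpl; rewrite QR_Q2Qc; unfold Q2R; simpl.
    repeat split; auto; intros f Hf.
    - pose proof (inX_bounds f s g0 Hf); lra.
    - intros Hn; exfalso; apply Hn. pose proof (inX_bounds f s g0 Hf); lra. }
  pose proof (inX_bounds x s g0 Hx) as Ha.
  destruct (exists_QR_between (x s g0) (x s g0 + (QR q0 - x s g0) / 3)) as [q0' Hq0']; [lra|].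
  destruct (exists_QR_between 0 (Rmin ((QR q0 - x s g0) / 3) 1)) as [ep Hep];
    [apply Rmin_glb_lt; lra|].
  pose proof (Rmin_l ((QR q0 - x s g0) / 3) 1). pose proof (Rmin_r ((QR q0 - x s g0) / 3) 1).
  destruct (inX_cond3 x s g0 q0' ep Hx Hg0 ltac:(unfold in01; lra)
              ltac:(unfold in01; lra) ltac:(lra))
    as (q1 & q2 & g1 & m & n & Hg1 & Hq2 & Hq1 & Hd & Hu).
  destruct (admissible_small q0' q1 q2) as [del [Hdel Hadm]];
    try (unfold in01; lra).
  destruct (exists_QR_between 0 (Rmin del (QR q0 - QR ep - QR q0'))) as [e He];
    [apply Rmin_glb_lt; lra|].
  pose proof (Rmin_l del (QR q0 - QR ep - QR q0')).
  pose proof (Rmin_r del (QR q0 - QR ep - QR q0')).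
  assert (Hadm_e : admissible q0' q1 q2 e) by (apply Hadm; lra).
  exists (useq s q0' q1 q2 m n, g1, q2), (tseq s q0' q1 q2 m n, g1, Q2Qc (this q1 - this e)).
  simpl; rewrite QR_Q2Qc, Q2R_minus.
  repeat split; auto.
  - intros f Hf Hfu Hft. exact (inX_cond2 f s g1 m n _ _ _ _ Hf Hg1 Hadm_e (conj Hfu Hft)).
  - (* [f_s(g1) >= q0 - d(g0, g1) > q0' + e], so condition (1) forces the claim *)
    intros f Hf Hn. pose proof (inX_lip f s g0 g1 Hf).
    destruct (inX_cond1 f s g1 m n q0' q1 q2 e Hf Hg1 Hadm_e); [assumption|].
    exfalso; apply Hn; lra.
Qed.

Lemma basic_separation (x : Defs.family G) (l : list (trip G)) :
  inX d G0 x -> Forall on_G0 l -> Forall (subbasic_holds x) l ->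
  exists lu lv : list (trip G),
    Forall on_G0 lu /\ Forall on_G0 lv /\ Forall (subbasic_holds x) lu /\
    (forall f, inX d G0 f -> Forall (subbasic_holds f) lu ->
       Exists (subbasic_holds f) lv -> False) /\
    (forall f, inX d G0 f -> ~ Forall (subbasic_holds f) l ->
       Exists (subbasic_holds f) lv).
Proof.
  intros Hx. induction l as [|p l IH]; intros HG Hh.
  - exists nil, nil. repeat split; auto.
    + intros f _ _ He; inversion He.
    + intros f _ Hn; exfalso; apply Hn; constructor.
  - apply Forall_cons_iff in HG as [Hp HG]; apply Forall_cons_iff in Hh as [Hxp Hh].
    destruct (IH HG Hh) as (lu & lv & Hlu & Hlv & Hxu & Hdisj & Hcov).
    destruct (subbasic_separation x p Hx Hp Hxp)
      as (pu & pv & Hpu & Hpv & Hxpu & Hpdisj & Hpcov).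
    exists (pu :: lu), (pv :: lv). repeat split; auto.
    + intros f Hf Hu He. apply Forall_cons_iff in Hu as [Hfpu Hu].
      inversion He; subst; eauto.
    + intros f Hf Hn. destruct (classic (subbasic_holds f p)) as [Hfp | Hfp].
      * apply Exists_cons_tl, Hcov; auto.
      * apply Exists_cons_hd, Hpcov; auto.
Qed.

Lemma tau_open_basic (l : list (trip G)) :
  Forall on_G0 l ->
  tau_open d G0 (fun f => inX d G0 f /\ Forall (subbasic_holds f) l).
Proof.
  intros Hl. split; [tauto|].
  intros f [_ Hf]. exists l. split; [exact Hl|]. split; [exact Hf|].
  intros f' Hf' Hl'. split; assumption.
Qed.

Lemma tau_open_subbasic_union (l : list (trip G)) :
  Forall on_G0 l ->
  tau_open d G0 (fun f => inX d G0 f /\ Exists (subbasic_holds f) l).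
Proof.
  intros Hl. split; [tauto|].
  intros f [_ Hf]. apply Exists_exists in Hf as [p [Hin Hp]].
  exists (p :: nil). rewrite Forall_forall in Hl.
  split; [constructor; [apply Hl, Hin | constructor]|]. split; [constructor; auto|].
  intros f' Hf' Hp'. split; [assumption|].
  apply Exists_exists. exists p. split; [assumption|]. now inversion Hp'.
Qed.

End SeparationInX.

Theorem lemma2p5 (G : Type) (mul : G -> G -> G) (inv : G -> G) (e : G)
  (d : G -> G -> R) (G0 : G -> Prop) :
  polish_group_with_metric mul inv e d ->
  right_invariant mul d ->
  bounded_by_one d ->
  countable_dense_subgroup mul inv e d G0 ->
  tau_regular d G0.
Proof.
  (* only the defining conditions of [X] are used, not the structure of [G] *)
  intros _ _ _ _ x C Hx [HCX [_ HCopen]] HnC.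
  destruct (HCopen x (conj Hx HnC)) as (l & HlG0 & Hxl & Hl_sub).
  destruct (basic_separation G d G0 x l Hx HlG0 Hxl)
    as (lu & lv & Hlu & Hlv & Hxu & Hdisj & Hcov).
  exists (fun f => inX d G0 f /\ Forall (subbasic_holds f) lu),
         (fun f => inX d G0 f /\ Exists (subbasic_holds f) lv).
  split; [now apply tau_open_basic|].
  split; [now apply tau_open_subbasic_union|].
  split; [now split|].
  split.
  - intros y Hy. pose proof (HCX y Hy) as HyX. split; [exact HyX|].
    apply Hcov; [exact HyX|]. intros Hyl. now apply (Hl_sub y HyX Hyl).
  - intros y [[Hy Hu] [_ Hv]]. exact (Hdisj y Hy Hu Hv).
Qed.
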